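(* Let $G$ be a fixed connected simple undirected graph on $N\ge2$ nodes, $D=\max_i|N_i|$, and consider the system on $G$ with noise level $\eta\in(1-2/D,\,1]$. Then in the Markov chain of states $x(k)\in\{\pm1\}^N$, the states $+N$ (all $+1$) and $-N$ (all $-1$) are absorbing, and every other state is transient.
   Context: Nodes $V=\{1,\dots,N\}$ with values $x_i(k)\in\{+1,-1\}$. The neighborhood $N_i$ of node $i$ consists of $i$ and all nodes adjacent to $i$. With $v_i(k)=\frac{1}{|N_i|}\sum_{j\in N_i}x_j(k)$, the update is $x_i(k+1)=\operatorname{sign}[v_i(k)+\xi_i(k)]$, where $\xi_i(k)$ are i.i.d. uniform on $[-\eta,\eta]$ across $i$ and $k$, independent of $x(0)$. A state is absorbing if its one-step transition probability to itself is one; it is transient if, starting from it, it reappears with probability strictly less than one. *)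

From HB Require Import structures.
From mathcomp Require Import all_boot all_order all_algebra.
Set Implicit Arguments. Unset Strict Implicit. Unset Printing Implicit Defensive.
Import Order.TTheory GRing.Theory Num.Theory.
Local Open Scope ring_scope.

(* A state x in {+1,-1}^N is encoded as a boolean finite function:
   true <-> +1, false <-> -1. *)
Definition state (N : nat) := {ffun 'I_N -> bool}.

Definition spin (R : pzRingType) (b : bool) : R := if b then 1 else -1.

Definition nbhd (N : nat) (e : rel 'I_N) (i : 'I_N) : {set 'I_N} :=
  [set j | (j == i) || e i j].

Definition maxnbhd (N : nat) (e : rel 'I_N) : nat := (\max_(i < N) #|nbhd e i|)%N.

Definition avg (R : realFieldType) (N : nat) (e : rel 'I_N) (x : state N) (i : 'I_N) : R :=
  (\sum_(j in nbhd e i) spin R (x j)) / (#|nbhd e i|%:R).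

Definition clamp01 (R : realFieldType) (t : R) : R := Num.min 1 (Num.max 0 t).

(* P(sign(v_i + xi_i) = +1) with xi_i ~ Uniform[-eta, eta], eta > 0:
   = P(xi > -v) = clamp((v + eta) / (2 eta)) (the event v + xi = 0 is null). *)
Definition pplus (R : realFieldType) (N : nat) (e : rel 'I_N) (eta : R)
  (x : state N) (i : 'I_N) : R :=
  clamp01 ((avg R e x i + eta) / (2 * eta)).

(* one-step transition probability; the xi_i are independent across i *)
Definition trans (R : realFieldType) (N : nat) (e : rel 'I_N) (eta : R)
  (x y : state N) : R :=
  \prod_(i < N) (if y i then pplus e eta x i else 1 - pplus e eta x i).

(* avoid x m z = P(X_{m+1} = z, X_1 <> x, ..., X_{m+1} <> x | X_0 = x) *)
Fixpoint avoid (R : realFieldType) (N : nat) (e : rel 'I_N) (eta : R)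
  (x : state N) (m : nat) (z : state N) : R :=
  match m with
  | 0%N => if z == x then 0 else trans e eta x z
  | m'.+1 => if z == x then 0
             else \sum_(w : state N) avoid e eta x m' w * trans e eta w z
  end.

(* first_ret x m = P(first return time to x equals m+1 | X_0 = x) *)
Definition first_ret (R : realFieldType) (N : nat) (e : rel 'I_N) (eta : R)
  (x : state N) (m : nat) : R :=
  match m with
  | 0%N => trans e eta x x
  | m'.+1 => \sum_(w : state N) avoid e eta x m' w * trans e eta w x
  end.

Definition ret_within (R : realFieldType) (N : nat) (e : rel 'I_N) (eta : R)
  (x : state N) (n : nat) : R :=
  \sum_(m < n) first_ret e eta x m.

Definition absorbing (R : realFieldType) (N : nat) (e : rel 'I_N) (eta : R)
  (x : state N) : Prop :=
  trans e eta x x = 1.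

(* return probability = lim_n ret_within n (a nondecreasing sequence) < 1 *)
Definition transient (R : realFieldType) (N : nat) (e : rel 'I_N) (eta : R)
  (x : state N) : Prop :=
  exists c : R, c < 1 /\ forall n : nat, ret_within e eta x n <= c.

Definition all_plus (N : nat) : state N := [ffun _ => true].
Definition all_minus (N : nat) : state N := [ffun _ => false].

From HB Require Import structures.
From mathcomp Require Import all_boot all_order all_algebra.
Import Order.TTheory GRing.Theory Num.Theory.
Local Open Scope ring_scope.
Set Implicit Arguments. Unset Strict Implicit.

(* Absorption: if the whole neighbourhood of i is unanimous, v_i = +-1 and,
   since eta <= 1, node i keeps its value with probability one.
   Transience: a state x is transient as soon as the chain started at x can
   reach, without first returning to x, an absorbing state P <> x.  Indeed the
   probability of having avoided x up to time m+1 equals 1 - ret_within (m+1)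
   and dominates the (nondecreasing in m) probability of sitting in P.
   To reach the all-plus state we use the growth map [grow w] turning on every
   node having a +1 neighbour: the bound eta > 1 - 2/D makes each such node
   switch to +1 with positive probability, while a node surrounded by -1 stays
   -1 surely, so w -> grow w has positive probability.  By connectivity, grow
   strictly decreases the number of -1 nodes until all-plus is reached, and it
   never comes back to x since it only adds +1's. *)

Section Chain.
Variables (R : realFieldType) (N : nat) (e : rel 'I_N) (eta : R).

Lemma pplus_ge0 x i : 0 <= pplus e eta x i.
Proof. by rewrite /pplus /clamp01 le_min ler01 le_max lexx. Qed.

Lemma pplus_le1 x i : pplus e eta x i <= 1.
Proof. by rewrite /pplus /clamp01 ge_min lexx. Qed.

Lemma trans_ge0 x y : 0 <= trans e eta x y.
Proof.
apply: prodr_ge0 => i _; case: (y i); first exact: pplus_ge0.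
by rewrite subr_ge0 pplus_le1.
Qed.

Lemma trans_sum1 x : \sum_y trans e eta x y = 1.
Proof.
rewrite /trans -(bigA_distr_bigA
  (fun i (b : bool) => if b then pplus e eta x i else 1 - pplus e eta x i)).
by rewrite big1 // => i _; rewrite big_bool /= addrC subrK.
Qed.

Lemma avoid_ge0 x m z : 0 <= avoid e eta x m z.
Proof.
elim: m z => [|m IH] z /=; case: (z == x) => //; first exact: trans_ge0.
by apply: sumr_ge0 => w _; rewrite mulr_ge0 ?trans_ge0.
Qed.

Lemma first_ret_ge0 x m : 0 <= first_ret e eta x m.
Proof.
case: m => [|m] /=; first exact: trans_ge0.
by apply: sumr_ge0 => w _; rewrite mulr_ge0 ?avoid_ge0 ?trans_ge0.
Qed.

Lemma avoid_step x m w z :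
  z != x -> avoid e eta x m w * trans e eta w z <= avoid e eta x m.+1 z.
Proof.
move=> /negbTE /= ->; rewrite (bigD1 w) //= lerDl.
by apply: sumr_ge0 => u _; rewrite mulr_ge0 ?avoid_ge0 ?trans_ge0.
Qed.

Lemma sum_except (T : finType) (x : T) (f : T -> R) :
  \sum_z (if z == x then 0 else f z) = \sum_z f z - f x.
Proof.
rewrite [in RHS](bigD1 x) //= (bigD1 x) //= eqxx add0r addrAC subrr add0r.
by apply: eq_bigr => z /negbTE ->.
Qed.

Lemma sum_avoid x m : \sum_z avoid e eta x m z = 1 - ret_within e eta x m.+1.
Proof.
elim: m => [|m IH]; first by rewrite /= sum_except trans_sum1 /ret_within big_ord1.
rewrite /= sum_except exchange_big /=.
under eq_bigr => w _ do rewrite -mulr_sumr trans_sum1 mulr1.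
by rewrite IH /ret_within [in RHS]big_ord_recr /= opprD addrA.
Qed.

Lemma ret_within_mono x m n :
  (m <= n)%N -> ret_within e eta x m <= ret_within e eta x n.
Proof.
move=> /subnK <-; elim: (n - m)%N => [|k IH] //.
apply: le_trans IH _; rewrite addSn /ret_within big_ord_recr /= lerDl.
exact: first_ret_ge0.
Qed.

Lemma transient_of_absorbing_reach x P k :
  P != x -> absorbing e eta P -> 0 < avoid e eta x k P -> transient e eta x.
Proof.
move=> hPx hP hk; exists (1 - avoid e eta x k P); split.
  by rewrite ltrBlDr ltrDl.
have avoid_mono m : (k <= m)%N -> avoid e eta x k P <= avoid e eta x m P.
  move=> /subnK <-; elim: (m - k)%N => [|j IH] //.
  by apply: le_trans IH _; rewrite addSn -[X in X <= _]mulr1 -hP avoid_step.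
have ret_bound m : (k <= m)%N -> ret_within e eta x m.+1 <= 1 - avoid e eta x k P.
  move=> hkm; rewrite lerBrDl -lerBrDr -sum_avoid (bigD1 P) //=.
  apply: le_trans (avoid_mono m hkm) _; rewrite lerDl.
  by apply: sumr_ge0 => w _; apply: avoid_ge0.
move=> n; case: (leqP n k.+1) => hn.
  exact: le_trans (ret_within_mono x hn) (ret_bound k (leqnn k)).
by case: n hn => // n; rewrite ltnS => /ltnW; apply: ret_bound.
Qed.

End Chain.

Section SwitchingProbability.
Variables (R : realFieldType) (N : nat) (e : rel 'I_N) (eta : R).

Lemma nbhd_self i : i \in nbhd e i.
Proof. by rewrite inE eqxx. Qed.

Lemma card_nbhd_gt0 i : (0 < #|nbhd e i|)%N.
Proof. by rewrite card_gt0; apply/set0Pn; exists i; apply: nbhd_self. Qed.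

Lemma card_nbhd_le i : (#|nbhd e i| <= maxnbhd e)%N.
Proof. exact: (leq_bigmax_cond (F := fun i => #|nbhd e i|) i). Qed.

Lemma avg_const (w : state N) i b :
  (forall j, j \in nbhd e i -> w j = b) -> avg R e w i = spin R b.
Proof.
move=> h; rewrite /avg (eq_bigr (fun _ => spin R b)); last by move=> j /h ->.
by rewrite sumr_const -[spin R b *+ _]mulr_natr mulfK // pnatr_eq0 -lt0n card_nbhd_gt0.
Qed.

Lemma sum_spin_lower (w : state N) (A : {set 'I_N}) j0 :
  j0 \in A -> w j0 -> 2 - #|A|%:R <= \sum_(j in A) spin R (w j).
Proof.
move=> hA hw.
have spin_ge j : -1 + 2 * (j == j0)%:R <= spin R (w j).
  case: eqP => [->|_]; first by rewrite hw /spin mulr1 addrC -addrA subrr addr0.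
  by rewrite mulr0 addr0 /spin; case: (w j); rewrite // -subr_ge0 opprK (ler_wpDl ler01).
apply: le_trans (ler_sum _ (fun j _ => spin_ge j)).
rewrite big_split /= sumr_const -mulr_sumr (bigD1 j0) //= eqxx big1; last first.
  by move=> j /andP [_ /negbTE ->].
by rewrite mulNrn addr0 mulr1 addrC.
Qed.

Hypothesis D_ge2 : (2 <= maxnbhd e)%N.
Hypothesis eta_gt : 1 - 2 / (maxnbhd e)%:R < eta.
Hypothesis eta_le1 : eta <= 1.

Lemma eta_gt0 : 0 < eta.
Proof.
apply: le_lt_trans eta_gt; rewrite subr_ge0 ler_pdivrMr ?mul1r ?ler_nat //.
by rewrite ltr0n (leq_trans _ D_ge2).
Qed.

(* With one +1 in its neighbourhood, v_i >= 2/|N_i| - 1 >= 2/D - 1 > -eta. *)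
Lemma avg_lower (w : state N) i j0 :
  j0 \in nbhd e i -> w j0 -> 2 / (maxnbhd e)%:R - 1 <= avg R e w i.
Proof.
move=> hj hw; have hn : 0 < (#|nbhd e i|%:R : R) by rewrite ltr0n card_nbhd_gt0.
rewrite /avg; apply: le_trans (ler_wpM2r _ (sum_spin_lower hj hw)).
  rewrite mulrBl divff ?gt_eqF // lerD2r; apply: ler_wpM2l => //.
  by rewrite lef_pV2 ?posrE ?ler_nat ?card_nbhd_le // ltr0n (leq_trans _ D_ge2).
by rewrite invr_ge0 ltW.
Qed.

Lemma pplus_gt0 (w : state N) i j0 :
  j0 \in nbhd e i -> w j0 -> 0 < pplus e eta w i.
Proof.
move=> hj hw; rewrite /pplus /clamp01 lt_min ltr01 lt_max ltxx /=.
apply: divr_gt0; last by rewrite mulr_gt0 ?eta_gt0.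
apply: lt_le_trans (lerD (avg_lower hj hw) (lexx eta)).
by rewrite -opprB [_ + eta]addrC subr_gt0.
Qed.

Lemma pplus_all_minus (w : state N) i :
  (forall j, j \in nbhd e i -> w j = false) -> pplus e eta w i = 0.
Proof.
move=> h; rewrite /pplus (avg_const h) /spin /clamp01 (@max_l _ _ 0) ?min_r //.
apply: mulr_le0_ge0; first by rewrite addrC subr_le0.
by rewrite invr_ge0 mulr_ge0 ?ltW ?eta_gt0.
Qed.

Lemma pplus_all_plus (w : state N) i :
  (forall j, j \in nbhd e i -> w j = true) -> pplus e eta w i = 1.
Proof.
move=> h; rewrite /pplus (avg_const h) /spin /clamp01 min_l // le_max.
apply/orP; right; rewrite ler_pdivlMr ?mulr_gt0 ?eta_gt0 //.
by rewrite mul1r mulr_natl mulr2n lerD2r.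
Qed.

Lemma absorbing_all_plus : absorbing e eta (all_plus N).
Proof.
rewrite /absorbing /trans big1 // => i _.
by rewrite ffunE pplus_all_plus // => j _; rewrite ffunE.
Qed.

Lemma absorbing_all_minus : absorbing e eta (all_minus N).
Proof.
rewrite /absorbing /trans big1 // => i _.
by rewrite ffunE pplus_all_minus ?subr0 // => j _; rewrite ffunE.
Qed.

End SwitchingProbability.

Section Growth.
Variables (N : nat) (e : rel 'I_N).

Definition grow (w : state N) : state N :=
  [ffun i => [exists j in nbhd e i, w j]].

Definition minus_set (w : state N) : {set 'I_N} := [set i | ~~ w i].

Lemma grow_ge (w : state N) i : w i -> grow w i.
Proof. by move=> hw; rewrite ffunE; apply/exists_inP; exists i; rewrite ?nbhd_self. Qed.

Lemma trans_grow_gt0 (R : realFieldType) (eta : R) (w : state N) :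
  (2 <= maxnbhd e)%N -> 1 - 2 / (maxnbhd e)%:R < eta -> eta <= 1 ->
  0 < trans e eta w (grow w).
Proof.
move=> hD heta he1; apply: prodr_gt0 => i _; rewrite ffunE; case: ifPn.
  by case/exists_inP => j hj hw; apply: pplus_gt0 hj hw.
move=> hn; rewrite pplus_all_minus ?subr0 ?ltr01 // => j hj.
by apply/negbTE; apply: contraNN hn => hw; apply/exists_inP; exists j.
Qed.

Hypothesis e_sym : symmetric e.
Hypothesis e_connected : forall i j : 'I_N, connect e i j.

(* In a connected graph, a mixed state has a -1 node next to a +1 node,
   which [grow] turns on. *)
Lemma grow_turns_on (w : state N) :
  (exists i, w i) -> (exists j, ~~ w j) -> exists v, grow w v && ~~ w v.
Proof.
move=> [i hi] [j hj]; case/connectP: (e_connected i j) => p hp hl; subst j.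
elim: p i hi hp hj => [|b p IH] a ha /=; first by rewrite ha.
case/andP => hab hp hl; case: (boolP (w b)) => hb; first exact: IH hb hp hl.
exists b; rewrite hb andbT ffunE; apply/exists_inP; exists a => //.
by rewrite inE e_sym hab orbT.
Qed.

Lemma grow_progress (w x : state N) :
  (exists i, w i) -> (exists j, ~~ w j) -> (forall i, x i -> w i) ->
  (#|minus_set (grow w)| < #|minus_set w|)%N /\ grow w != x.
Proof.
move=> hp hm hxw; have [v /andP [hgv hwv]] := grow_turns_on hp hm.
split; last by apply/eqP => hg; move: (contraNN (hxw v) hwv); rewrite -hg hgv.
apply: proper_card; apply/properP; split; last by exists v; rewrite !inE ?hwv ?hgv.
by apply/subsetP => i; rewrite !inE; apply: contraNN; apply: grow_ge.
Qed.

End Growth.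

Lemma all_plus_of_no_minus N (w : state N) : ~~ [exists j, ~~ w j] -> w = all_plus N.
Proof. by move/existsPn => h; apply/ffunP => i; rewrite ffunE; apply/negPn/h. Qed.

Lemma all_minus_of_no_plus N (w : state N) : ~~ [exists j, w j] -> w = all_minus N.
Proof. by move/existsPn => h; apply/ffunP => i; rewrite ffunE; apply/negbTE/h. Qed.

(* A connected graph on at least two nodes has an edge, so D >= 2. *)
Lemma maxnbhd_ge2 N (e : rel 'I_N) : (2 <= N)%N -> irreflexive e ->
  (forall i j : 'I_N, connect e i j) -> (2 <= maxnbhd e)%N.
Proof.
move=> hN hirr hc.
pose i0 : 'I_N := Ordinal (ltn_trans (ltnSn 0) hN).
case/connectP: (hc i0 (Ordinal hN)) => [[|k p]] /=; first by move=> _ /(congr1 val).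
case/andP => hk _ _; have hki : k != i0 by apply: contraTneq hk => ->; rewrite hirr.
apply: leq_trans (card_nbhd_le e i0).
have <- : #|[set i0; k]| = 2%N by rewrite cards2 eq_sym hki.
apply: subset_leq_card; apply/subsetP => j.
by rewrite !inE => /orP [] /eqP ->; rewrite ?eqxx ?hk ?orbT.
Qed.

Lemma reach_all_plus (R : realFieldType) N (e : rel 'I_N) (eta : R) (x : state N) :
  symmetric e -> (forall i j : 'I_N, connect e i j) ->
  (2 <= maxnbhd e)%N -> 1 - 2 / (maxnbhd e)%:R < eta -> eta <= 1 ->
  (exists i, x i) -> forall n (w : state N) m,
  (#|minus_set w| <= n)%N -> (forall i, x i -> w i) ->
  0 < avoid e eta x m w -> exists k, 0 < avoid e eta x k (all_plus N).
Proof.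
move=> hs hc hD heta he1 [i0 hi0] n; elim: n => [|n IH] w m hn hxw hA;
  case: (boolP [exists j, ~~ w j]) => [/existsP hm|/all_plus_of_no_minus hw];
  try by exists m; rewrite -hw.
  case: hm => j hj; suff : (0 < #|minus_set w|)%N by rewrite ltnNge hn.
  by apply/card_gt0P; exists j; rewrite inE.
have hp : exists i, w i by exists i0; apply: hxw.
have [hlt hgx] := grow_progress hs hc hp hm hxw.
apply: (IH (grow e w) m.+1); first by rewrite -ltnS (leq_trans hlt).
  by move=> i /hxw /grow_ge.
apply: lt_le_trans (avoid_step _ _ m w hgx).
by rewrite mulr_gt0 ?trans_grow_gt0.
Qed.

Theorem lemma1 (R : realFieldType) (N : nat) (e : rel 'I_N) (eta : R) :
  (2 <= N)%N ->
  symmetric e -> irreflexive e ->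
  (forall i j : 'I_N, connect e i j) ->
  1 - 2 / (maxnbhd e)%:R < eta -> eta <= 1 ->
  absorbing e eta (all_plus N) /\ absorbing e eta (all_minus N) /\
  (forall x : state N, x <> all_plus N -> x <> all_minus N -> transient e eta x).
Proof.
move=> hN hs hirr hc heta he1; have hD := maxnbhd_ge2 hN hirr hc.
have hplus := absorbing_all_plus hD heta he1.
split=> //; split; first exact: absorbing_all_minus hD heta he1.
move=> x hxP hxM.
have hp : exists i, x i by apply/existsP; apply: contra_notT hxM => /all_minus_of_no_plus.
have hm : exists j, ~~ x j.
  by apply/existsP; apply: contra_notT hxP => /all_plus_of_no_minus.
have [_ hgx] := grow_progress hs hc hp hm (fun i (hi : x i) => hi).
have [k hk] : exists k, 0 < avoid e eta x k (all_plus N).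
  apply: (reach_all_plus hs hc hD heta he1 hp (n := N) (m := 0) (w := grow e x)).
  - by rewrite -[X in (_ <= X)%N]card_ord max_card.
  - by move=> i /grow_ge.
  - by rewrite /= (negbTE hgx) trans_grow_gt0.
by apply: transient_of_absorbing_reach hplus hk; apply/eqP => hPx; apply: hxP.
Qed.
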